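(* Let $\mathfrak g$ be a Lie algebra over a field $\mathbb{K}$ of characteristic zero. Then $|U(\mathfrak g)|=\bigoplus_{m=0}^\infty|\mathrm{Sym}^m\mathfrak g|$, i.e. $|U(\mathfrak g)|$ is the direct sum of the images $|\mathrm{Sym}^m\mathfrak g|$ of the subspaces $\mathrm{Sym}^m\mathfrak g\subset U(\mathfrak g)$.
   Context: $|U(\mathfrak g)|=U(\mathfrak g)/[U(\mathfrak g),U(\mathfrak g)]$, where $[U(\mathfrak g),U(\mathfrak g)]$ is the span of $ab-ba$, with projection $u\mapsto|u|$. $\mathrm{Sym}^m\mathfrak g$ is identified with a subspace of $U(\mathfrak g)$ via the symmetrization map $x_1\cdots x_m\mapsto\frac1{m!}\sum_{\sigma\in\mathfrak S_m}x_{\sigma(1)}\cdots x_{\sigma(m)}$, so that $U(\mathfrak g)=\bigoplus_{m\ge0}\mathrm{Sym}^m\mathfrak g$ (PBW); $|\mathrm{Sym}^m\mathfrak g|$ denotes the image of this subspace in $|U(\mathfrak g)|$. *)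

From HB Require Import structures.
From mathcomp Require Import all_boot all_order all_fingroup all_algebra.
Set Implicit Arguments. Unset Strict Implicit. Unset Printing Implicit Defensive.
Import Order.TTheory GRing.Theory Num.Theory.
Local Open Scope ring_scope.

Definition is_lie_bracket (K : fieldType) (V : lmodType K) (br : V -> V -> V) : Prop :=
  [/\ forall (a : K) (x y z : V), br (a *: x + y) z = a *: br x z + br y z,
      forall (a : K) (x y z : V), br x (a *: y + z) = a *: br x y + br x z,
      forall x : V, br x x = 0
    & forall x y z : V, br x (br y z) + br y (br z x) + br z (br x y) = 0].

Definition is_linear_map (K : fieldType) (V : lmodType K) (W : lmodType K) (f : V -> W) : Prop :=
  forall (a : K) (x y : V), f (a *: x + y) = a *: f x + f y.

Definition is_lie_map (K : fieldType) (V : lmodType K) (br : V -> V -> V)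
  (B : algType K) (f : V -> B) : Prop :=
  is_linear_map f /\ forall x y, f (br x y) = f x * f y - f y * f x.

Definition is_alg_hom (K : fieldType) (A B : algType K) (h : A -> B) : Prop :=
  [/\ is_linear_map h, h 1 = 1 & forall u v, h (u * v) = h u * h v].

Definition is_enveloping (K : fieldType) (V : lmodType K) (br : V -> V -> V)
  (U : algType K) (iota : V -> U) : Prop :=
  is_lie_map br iota /\
  forall (B : algType K) (f : V -> B), is_lie_map br f ->
    (exists h : U -> B, is_alg_hom h /\ forall x, h (iota x) = f x) /\
    (forall h1 h2 : U -> B, is_alg_hom h1 -> is_alg_hom h2 ->
       (forall x, h1 (iota x) = h2 (iota x)) -> forall u, h1 u = h2 u).

Definition symmetrize (K : fieldType) (V : lmodType K) (U : algType K)
  (iota : V -> U) (m : nat) (x : m.-tuple V) : U :=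
  (m`!%:R : K)^-1 *: \sum_(s : 'S_m) \prod_(i < m) iota (tnth x (s i)).

(* u lies in Sym^m g, viewed as a subspace of U(g) via symmetrization *)
Definition in_Sym (K : fieldType) (V : lmodType K) (U : algType K)
  (iota : V -> U) (m : nat) (u : U) : Prop :=
  exists (n : nat) (c : 'I_n -> K) (xs : 'I_n -> m.-tuple V),
    u = \sum_(j < n) c j *: symmetrize iota (xs j).

Definition in_comm (K : fieldType) (U : algType K) (u : U) : Prop :=
  exists (n : nat) (a b : 'I_n -> U), u = \sum_(j < n) (a j * b j - b j * a j).

From HB Require Import structures.
From mathcomp Require Import all_boot all_order all_fingroup all_algebra.
From mathcomp Require Import boolp.
Set Implicit Arguments. Unset Strict Implicit. Unset Printing Implicit Defensive.
Import Order.TTheory GRing.Theory Num.Theory.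
Local Open Scope ring_scope.

(* Spanning: modulo words of smaller length, a word x_1 ... x_m in U equals
   each of its permutations (exchanging two adjacent letters costs a word
   containing their bracket), hence equals its symmetrization up to shorter
   words; by induction on the length, U is spanned by symmetrized words.
   Directness: an element a (x) b of U (x) U^op acts on End U by
   f |-> a f( . b), so the universal property applied to
   x |-> x (x) 1 + 1 (x) x yields the coproduct of U acting on End U, and
   evaluating at the identity and at 1 gives the linear operator T = mu o Delta
   on U.  T commutes with ad x for x in g, hence maps [U,U] into itself, and it
   multiplies Sym^m g by 2^m.  In characteristic zero these eigenvalues are
   distinct, so a product of factors T - 2^j isolates each component of an
   element of [U,U] inside [U,U]. *)

Fixpoint masks (n : nat) : seq (seq bool) :=
  if n is n'.+1 then map (cons true) (masks n') ++ map (cons false) (masks n')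
  else [:: [::]].

Lemma size_masks n : size (masks n) = (2 ^ n)%N.
Proof. by elim: n => //= n IHn; rewrite size_cat !size_map IHn expnS mul2n addnn. Qed.

Lemma size_mem_masks n b : b \in masks n -> size b = n.
Proof.
elim: n b => [|n IHn] b /=; first by rewrite inE => /eqP ->.
by rewrite mem_cat => /orP[] /mapP[b' /IHn <- ->].
Qed.

Lemma perm_mask_cat (T : eqType) (b : seq bool) (s : seq T) : size b = size s ->
  perm_eq (mask b s ++ mask (map negb b) s) s.
Proof.
elim: s b => [|x s IHs] [|[] b] //= [/IHs pb]; first by rewrite perm_cons.
by rewrite -cat1s perm_catCA perm_cons.
Qed.

Lemma pchar0_natr_inj (R : idomainType) :
  [pchar R] =i pred0 -> injective (fun n : nat => n%:R : R).
Proof.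
move=> /pcharf0P natr_eq0 m n eq_mn; apply/eqP.
wlog le_mn : m n eq_mn / (m <= n)%N => [wlog|].
  by case/orP: (leq_total m n) => [|le_nm]; [exact: wlog | rewrite eq_sym; exact: wlog].
by rewrite eqn_leq le_mn -subn_eq0 -natr_eq0 natrB // eq_mn subrr eqxx.
Qed.

Lemma mask_cat_enum_perm m (b : seq bool) : size b = m ->
  exists p : 'S_m,
    mask b (enum 'I_m) ++ mask (map negb b) (enum 'I_m) = [seq p i | i <- enum 'I_m].
Proof.
move=> size_b; have /tuple_permP[p ->] : perm_eq (mask b (enum 'I_m) ++
    mask (map negb b) (enum 'I_m)) (ord_tuple m).
  by rewrite val_ord_tuple perm_mask_cat // size_enum_ord.
by exists p; apply: eq_map => i; rewrite tnth_ord_tuple.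
Qed.

Lemma commrD_commutator (R : pzRingType) (a b c d : R) :
  GRing.comm a d -> GRing.comm b c ->
  (a + b) * (c + d) - (c + d) * (a + b) = (a * c - c * a) + (b * d - d * b).
Proof.
move=> ad bc; rewrite !mulrDl !mulrDr ad bc [c * a + c * b]addrC.
rewrite [_ + (d * a + _)]addrACA [a * c + d * a]addrC [d * a + a * c + _]addrACA.
by rewrite [c * b + d * a]addrC [d * a + c * b + _]addrC addrKA opprD addrACA.
Qed.

(** * Linear endomorphisms *)

Section LinearEndomorphisms.
Variables (K : comPzRingType) (M : lmodType K).

Record lend := Lend { lend_fun :> M -> M; lend_linear : linear lend_fun }.

HB.instance Definition _ (f : lend) :=
  GRing.isLinear.Build K M M *:%R (lend_fun f) (lend_linear f).

Lemma lendP (f g : lend) : f =1 g -> f = g.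
Proof.
case: f g => [f lf] [g lg] /= /funext efg; subst g.
by congr Lend; apply: Prop_irrelevance.
Qed.

HB.instance Definition _ := gen_eqMixin lend.
HB.instance Definition _ := gen_choiceMixin lend.

Let lend_of (f : {linear M -> M}) : lend := Lend (@linearP _ _ _ _ f).

Lemma scale_fun_linear (a : K) (f : lend) : linear (a \*: f).
Proof. by move=> b x y; rewrite /= linearP scalerDr !scalerA mulrC. Qed.

Let lend_scale (a : K) (f : lend) : lend := Lend (scale_fun_linear a f).

Let addA : associative (fun f g : lend => lend_of (f \+ g)).
Proof. by move=> f g h; apply: lendP => x /=; rewrite addrA. Qed.
Let addC : commutative (fun f g : lend => lend_of (f \+ g)).
Proof. by move=> f g; apply: lendP => x /=; rewrite addrC. Qed.
Let add0 : left_id (lend_of \0) (fun f g : lend => lend_of (f \+ g)).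
Proof. by move=> f; apply: lendP => x /=; rewrite add0r. Qed.
Let addN : left_inverse (lend_of \0) (fun f : lend => lend_of (\- f))
  (fun f g : lend => lend_of (f \+ g)).
Proof. by move=> f; apply: lendP => x /=; rewrite addNr. Qed.

HB.instance Definition _ := GRing.isZmodule.Build lend addA addC add0 addN.

Let scaleA a b (f : lend) : lend_scale a (lend_scale b f) = lend_scale (a * b) f.
Proof. by apply: lendP => x /=; rewrite scalerA. Qed.
Let scale1 : left_id 1 lend_scale.
Proof. by move=> f; apply: lendP => x /=; rewrite scale1r. Qed.
Let scaleDr : right_distributive lend_scale +%R.
Proof. by move=> a f g; apply: lendP => x /=; rewrite scalerDr. Qed.
Let scaleDl (f : lend) : {morph lend_scale^~ f : a b / a + b}.
Proof. by move=> a b; apply: lendP => x /=; rewrite scalerDl. Qed.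

HB.instance Definition _ :=
  GRing.Zmodule_isLmodule.Build K lend scaleA scale1 scaleDr scaleDl.

Let mulA : associative (fun f g : lend => lend_of (f \o g)).
Proof. by move=> f g h; apply: lendP. Qed.
Let mul1 : left_id (lend_of idfun) (fun f g : lend => lend_of (f \o g)).
Proof. by move=> f; apply: lendP. Qed.
Let mulr1 : right_id (lend_of idfun) (fun f g : lend => lend_of (f \o g)).
Proof. by move=> f; apply: lendP. Qed.
Let mulDl : left_distributive (fun f g : lend => lend_of (f \o g)) +%R.
Proof. by move=> f g h; apply: lendP. Qed.
Let mulDr : right_distributive (fun f g : lend => lend_of (f \o g)) +%R.
Proof. by move=> f g h; apply: lendP => x /=; rewrite linearD. Qed.

HB.instance Definition _ :=
  GRing.Zmodule_isPzRing.Build lend mulA mul1 mulr1 mulDl mulDr.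

Lemma lend_addE (f g : lend) x : (f + g) x = f x + g x. Proof. by []. Qed.
Lemma lend_mulE (f g : lend) x : (f * g) x = f (g x). Proof. by []. Qed.

End LinearEndomorphisms.

Section LinearEndomorphismAlgebra.
Variables (K : comPzRingType) (A : lalgType K).

Let lend_nonzero : (1 : lend A) != 0.
Proof. by apply/eqP => /(congr1 (fun f : lend A => f 1)); apply/eqP/oner_neq0. Qed.

HB.instance Definition _ := GRing.PzSemiRing_isNonZero.Build (lend A) lend_nonzero.

Let scalerAl (a : K) (f g : lend A) : a *: (f * g) = (a *: f) * g.
Proof. by apply: lendP. Qed.
HB.instance Definition _ := GRing.Lmodule_isLalgebra.Build K (lend A) scalerAl.

Let scalerAr (a : K) (f g : lend A) : a *: (f * g) = f * (a *: g).
Proof. by apply: lendP => x /=; rewrite linearZ. Qed.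
HB.instance Definition _ := GRing.Lalgebra_isAlgebra.Build K (lend A) scalerAr.

End LinearEndomorphismAlgebra.

Section MultiplicationOperators.
Variables (K : comPzRingType) (A : algType K).

Lemma lmul_fun_linear (a : A) : linear ( *%R a).
Proof. by move=> k u v; rewrite mulrDr scalerAr. Qed.

Lemma rmul_fun_linear (a : A) : linear ( *%R^~ a).
Proof. by move=> k u v; rewrite mulrDl scalerAl. Qed.

Definition lmul (a : A) : lend A := Lend (lmul_fun_linear a).
Definition rmul (a : A) : lend A := Lend (rmul_fun_linear a).

Lemma lmul_linear : linear lmul.
Proof. by move=> k a b; apply: lendP => v /=; rewrite mulrDl -scalerAl. Qed.

Lemma rmul_linear : linear rmul.
Proof. by move=> k a b; apply: lendP => v /=; rewrite mulrDr -scalerAr. Qed.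

HB.instance Definition _ := GRing.isLinear.Build K A (lend A) *:%R lmul lmul_linear.
HB.instance Definition _ := GRing.isLinear.Build K A (lend A) *:%R rmul rmul_linear.

Lemma lmulM a b : lmul (a * b) = lmul a * lmul b.
Proof. by apply: lendP => v /=; rewrite mulrA. Qed.

Lemma rmulM a b : rmul (a * b) = rmul b * rmul a.
Proof. by apply: lendP => v /=; rewrite mulrA. Qed.

Lemma lmul_rmulC a b : lmul a * rmul b = rmul b * lmul a.
Proof. by apply: lendP => v /=; rewrite mulrA. Qed.

End MultiplicationOperators.


(** * Linear spans *)

Section Span.
Variables (K : pzRingType) (M : lmodType K).
Implicit Types (S : M -> Prop) (u v : M).

Inductive span S : M -> Prop :=
  | span_gen v of S v : span S v
  | span0 : span S 0
  | span_comb a u v of span S u & span S v : span S (a *: u + v).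

Lemma spanD S u v : span S u -> span S v -> span S (u + v).
Proof. by move=> Su Sv; rewrite -[u]scale1r; apply: span_comb. Qed.

Lemma spanZ S a u : span S u -> span S (a *: u).
Proof. by move=> Su; rewrite -[_ *: _]addr0; apply: span_comb (span0 S). Qed.

Lemma spanB S u v : span S u -> span S v -> span S (u - v).
Proof. by move=> Su /(spanZ (-1)); rewrite scaleN1r; apply: spanD. Qed.

Lemma span_sum S (I : Type) (r : seq I) (P : pred I) (F : I -> M) :
  (forall i, P i -> span S (F i)) -> span S (\sum_(i <- r | P i) F i).
Proof. by move=> SF; apply: big_ind => //; [apply: span0 | apply: spanD]. Qed.

Lemma linear_fun0 (f : M -> M) : linear f -> f 0 = 0.
Proof. by move=> lin_f; have := zmod_morphism_linear lin_f 0 0; rewrite !subrr. Qed.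

Lemma span_map S S' (f : M -> M) :
  linear f -> (forall v, S v -> span S' (f v)) -> forall u, span S u -> span S' (f u).
Proof.
move=> lin_f fS u; elim=> [v /fS // | | a {}u v _ Su _ Sv].
  by rewrite linear_fun0 //; apply: span0.
by rewrite lin_f; apply: span_comb.
Qed.

Lemma span_sub S S' u : (forall v, S v -> span S' v) -> span S u -> span S' u.
Proof. by move=> SS'; apply: (@span_map S S' id (fun _ _ _ => erefl)). Qed.

Lemma span_linear_eq S (f g : M -> M) :
  linear f -> linear g -> (forall v, S v -> f v = g v) ->
  forall u, span S u -> f u = g u.
Proof.
move=> lin_f lin_g fg u; elim=> [v /fg // | | a {}u v _ fgu _ fgv].
  by rewrite !linear_fun0.
by rewrite lin_f lin_g fgu fgv.
Qed.

Lemma span_rangeP (X : Type) (f : X -> M) u :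
  span (fun v => exists x, v = f x) u <->
  exists n (c : 'I_n -> K) (xs : 'I_n -> X), u = \sum_(j < n) c j *: f (xs j).
Proof.
split=> [|[n [c [xs ->]]]]; last first.
  by apply: span_sum => j _; apply/spanZ/span_gen; exists (xs j).
elim=> [v [x ->] | | a {}u v _ [n1 [c1 [xs1 ->]]] _ [n2 [c2 [xs2 ->]]]].
- by exists 1%N, (fun _ => 1), (fun _ => x); rewrite big_ord1 scale1r.
- exists 0%N, (fun _ => 0); unshelve eexists; last by rewrite big_ord0.
  (* the empty family, as [X] may be empty *)
  by case=> j; rewrite ltn0.
exists (n1 + n2)%N.
exists (fun j => match split j with inl i => a * c1 i | inr i => c2 i end).
exists (fun j => match split j with inl i => xs1 i | inr i => xs2 i end).
rewrite big_split_ord scaler_sumr; congr (_ + _); apply: eq_bigr => i _.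
  by rewrite (unsplitK (inl i)) scalerA.
by rewrite (unsplitK (inr i)).
Qed.

Lemma span_graded (G : nat -> M -> Prop) u :
  span (fun v => exists m, G m v) u ->
  exists N (us : nat -> M), (forall m, span (G m) (us m)) /\ u = \sum_(m < N) us m.
Proof.
elim=> [v [m Gv] | | a {}u v _ [N1 [us1 [S1 ->]]] _ [N2 [us2 [S2 ->]]]].
- exists m.+1, (fun k => if k == m then v else 0); split.
    by move=> k; case: eqP => [-> | _]; [apply: span_gen | apply: span0].
  rewrite big_ord_recr /= eqxx big1 ?add0r // => k _.
  by rewrite ltn_eqF.
- by exists 0%N, (fun _ => 0); split=> [m|]; [apply: span0 | rewrite big_ord0].
pose cut N (us : nat -> M) k := if (k < N)%N then us k else 0.
have cut_span N us m : span (G m) (us m) -> span (G m) (cut N us m).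
  by rewrite /cut; case: ifP => _ // _; apply: span0.
have sum_cut N N' (us : nat -> M) : (N <= N')%N -> \sum_(m < N) us m = \sum_(m < N') cut N us m.
  by move=> le_NN'; rewrite (big_ord_widen _ _ le_NN') big_mkcond.
exists (maxn N1 N2), (fun k => a *: cut N1 us1 k + cut N2 us2 k); split.
  by move=> m; apply: span_comb; apply: cut_span.
rewrite big_split /= -scaler_sumr.
by rewrite -!sum_cut ?leq_maxl ?leq_maxr.
Qed.

End Span.

Section EigenComponents.
Variables (K : fieldType) (M : lmodType K).

Lemma lend_prod_eigen (T : lend M) (lam : K) v (I : Type) (r : seq I) (P : pred I)
    (c : I -> K) :
  T v = lam *: v ->
  (\prod_(i <- r | P i) (T - c i *: (1 : lend M))) v = (\prod_(i <- r | P i) (lam - c i)) *: v.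
Proof.
move=> Tv; apply: (big_rec2 (fun k (F : lend M) => F v = k *: v)) => [|i k F _ Fv].
  by rewrite scale1r.
by rewrite /= Fv linearZ /= Tv !scalerA -scalerBl mulrBl (mulrC k).
Qed.

Lemma span_eigen_components (S : M -> Prop) (T : lend M) (lam : nat -> K) :
  injective lam -> (forall u, span S u -> span S (T u)) ->
  forall N (us : 'I_N -> M), (forall m, T (us m) = lam m *: us m) ->
  span S (\sum_(m < N) us m) -> forall m, span S (us m).
Proof.
move=> lam_inj TS N us Tus S_sum m.
pose P := \prod_(j < N | j != m) (T - lam j *: (1 : lend M)).
have PS u : span S u -> span S (P u).
  apply: (big_ind (fun F : lend M => forall u, span S u -> span S (F u))) => //.
    by move=> F G FS GS w /GS /FS.
  by move=> j _ w Sw; apply: spanB (TS _ Sw) (spanZ _ Sw).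
have Pus k : P (us k) = (\prod_(j < N | j != m) (lam k - lam j)) *: us k.
  exact: lend_prod_eigen.
have := PS _ S_sum; rewrite linear_sum (bigD1 m) //= big1 ?addr0 => [|k km]; last first.
  by rewrite Pus (bigD1 k) //= subrr mul0r scale0r.
have Pm_neq0 : \prod_(j < N | j != m) (lam m - lam j) != 0.
  rewrite prodf_seq_neq0; apply/allP => j _; apply/implyP => jm.
  by rewrite subr_eq0; apply: contra jm => /eqP/lam_inj/val_inj ->.
by rewrite Pus => /(spanZ (\prod_(j < N | j != m) (lam m - lam j))^-1);
  rewrite scalerA mulVf // scale1r.
Qed.

End EigenComponents.

Section Commutators.
Variables (K : fieldType) (A : algType K).

Definition is_commutator (w : A) : Prop := exists p : A * A, w = p.1 * p.2 - p.2 * p.1.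

Lemma in_commE (w : A) : in_comm w <-> span is_commutator w.
Proof.
split=> [[n [a [b ->]]] | /span_rangeP [n [c [ab ->]]]].
  by apply: span_sum => j _; apply: span_gen; exists (a j, b j).
exists n, (fun j => c j *: (ab j).1), (fun j => (ab j).2).
by apply: eq_bigr => j _; rewrite scalerBr scalerAl scalerAr.
Qed.

End Commutators.

Arguments is_commutator {K A} w.

(** * Enveloping algebras *)

Section EnvelopingInduction.
Variables (K : fieldType) (V : lmodType K) (br : V -> V -> V).
Variables (U : algType K) (iota : V -> U).
Hypothesis Henv : is_enveloping br iota.
Variable Q : U -> Prop.
Hypotheses (Q1 : Q 1) (QD : forall u v, Q u -> Q v -> Q (u + v)).
Hypotheses (QZ : forall (a : K) u, Q u -> Q (a *: u)).
Hypotheses (QM : forall u v, Q u -> Q v -> Q (u * v)).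
Hypothesis Q_iota : forall x, Q (iota x).

Let Qb (u : U) : bool := `[< Q u >].

Let Qb_subalg_closed : GRing.subsemialg_closed Qb.
Proof.
have Q0 : Q 0 by rewrite -(scale0r 1); apply: QZ.
split; rewrite ?unfold_in; first by apply/asboolP.
- split=> [|u v]; rewrite !unfold_in; first by apply/asboolP.
  by move=> /asboolP Qu /asboolP Qv; apply/asboolP/QD.
- by move=> a u; rewrite !unfold_in => /asboolP Qu; apply/asboolP/QZ.
by move=> u v; rewrite !unfold_in => /asboolP Qu /asboolP Qv; apply/asboolP/QM.
Qed.

HB.instance Definition _ := GRing.isSubalgClosed.Build K U Qb Qb_subalg_closed.

Let subalg := {u : U | Qb u}.
HB.instance Definition _ := [isSub for (@proj1_sig U Qb) : subalg -> U].
HB.instance Definition _ := [Choice of subalg by <:].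
HB.instance Definition _ := [SubChoice_isSubAlgebra of subalg by <:].

Lemma enveloping_ind u : Q u.
Proof.
have [[iota_lin iota_br] univ] := Henv.
pose j x : subalg := exist _ (iota x) (asboolT (Q_iota x)).
have j_lie : is_lie_map br j.
  by split=> [a x y | x y]; apply: val_inj; rewrite /= ?iota_lin ?iota_br.
have [[h [[h_lin h1 hM] hj]] _] := univ _ _ j_lie.
have [_ uniq] := univ _ _ (proj1 Henv).
have val_h : is_alg_hom (fun u => val (h u)).
  by split=> [a v w | | v w]; rewrite ?h_lin ?h1 ?hM.
have <- : val (h u) = u by apply: (uniq _ _ val_h) => // x; rewrite hj.
exact/asboolP/(valP (h u)).
Qed.

End EnvelopingInduction.

Section Enveloping.
Variables (K : fieldType) (V : lmodType K) (br : V -> V -> V).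
Variables (U : algType K) (iota : V -> U).
Hypothesis Henv : is_enveloping br iota.

Lemma iota_linear : linear iota.
Proof. by case: Henv => [[]]. Qed.

Lemma iota_br x y : iota (br x y) = iota x * iota y - iota y * iota x.
Proof. by case: Henv => [[]]. Qed.

Definition word (xs : seq V) : U := \prod_(x <- xs) iota x.

Lemma word_cons x xs : word (x :: xs) = iota x * word xs.
Proof. exact: big_cons. Qed.

Lemma word_cat xs ys : word (xs ++ ys) = word xs * word ys.
Proof. exact: big_cat. Qed.

Definition is_word (u : U) : Prop := exists xs, u = word xs.

Lemma span_words u : span is_word u.
Proof.
apply: (enveloping_ind Henv) => [| v w | a v | v w | x].
- by apply: span_gen; exists [::]; rewrite /word big_nil.
- exact: spanD.
- exact: spanZ.
- move=> Sv Sw; apply: (span_map (rmul_fun_linear w) _ Sv) => _ [xs ->].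
  apply: (span_map (lmul_fun_linear (word xs)) _ Sw) => _ [ys ->].
  by apply: span_gen; exists (xs ++ ys); rewrite word_cat.
by apply: span_gen; exists [:: x]; rewrite /word big_seq1.
Qed.

Definition shorter_word (n : nat) (u : U) : Prop :=
  exists2 xs, (size xs < n)%N & u = word xs.

Lemma span_shorter_lmul x n u :
  span (shorter_word n) u -> span (shorter_word n.+1) (iota x * u).
Proof.
move=> Su; apply: (span_map (lmul_fun_linear (iota x)) _ Su) => _ [xs lt_xs ->].
by apply: span_gen; exists (x :: xs); rewrite ?word_cons.
Qed.

Lemma move_word z1 x z2 :
  span (shorter_word (size z1 + size z2).+1) (word (z1 ++ x :: z2) - word (x :: z1 ++ z2)).
Proof.
elim: z1 => [|z z1 IHz1] /=; first by rewrite subrr; apply: span0.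
have -> : word (z :: z1 ++ x :: z2) - word (x :: z :: z1 ++ z2) =
    iota z * (word (z1 ++ x :: z2) - word (x :: z1 ++ z2)) + word (br z x :: z1 ++ z2).
  by rewrite !word_cons iota_br mulrBr mulrBl !mulrA addrA subrK.
apply: spanD; first exact: span_shorter_lmul.
by apply: span_gen; exists (br z x :: z1 ++ z2); rewrite //= size_cat.
Qed.

Lemma perm_word ys zs : perm_eq ys zs -> span (shorter_word (size ys)) (word ys - word zs).
Proof.
elim: ys zs => [|x ys IHys] zs eq_yz.
  by move: eq_yz => /perm_size/esym/size0nil ->; rewrite subrr; apply: span0.
have : x \in zs by rewrite -(perm_mem eq_yz) mem_head.
move: eq_yz => /[swap] /splitPr[z1 z2] eq_yz.
have eq_ys : perm_eq ys (z1 ++ z2).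
  rewrite -(perm_cons x); apply: (perm_trans eq_yz).
  by rewrite -[x :: z2]cat1s perm_catCA.
have -> : word (x :: ys) - word (z1 ++ x :: z2) =
    iota x * (word ys - word (z1 ++ z2)) - (word (z1 ++ x :: z2) - word (x :: z1 ++ z2)).
  by rewrite mulrBr -!word_cons opprB addrA subrK.
apply: spanB; first exact/span_shorter_lmul/IHys.
by have := move_word z1 x z2; rewrite -size_cat -(perm_size eq_ys).
Qed.

Lemma prod_tnth_word m (t : m.-tuple V) (s : 'S_m) :
  \prod_(i < m) iota (tnth t (s i)) = word [seq tnth t (s i) | i <- enum 'I_m].
Proof. by rewrite /word big_map [index_enum _]unlock enumT. Qed.

Hypothesis Hchar : [pchar K] =i pred0.

Lemma word_sub_symmetrize ys :
  span (shorter_word (size ys)) (word ys - symmetrize iota (in_tuple ys)).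
Proof.
set n := size ys; set t := in_tuple ys.
have fact_neq0 : (n`!%:R : K) != 0 by rewrite ((pcharf0P K).1 Hchar) -lt0n fact_gt0.
have -> : word ys - symmetrize iota t =
    (n`!%:R)^-1 *: \sum_(s : 'S_n) (word ys - word [seq tnth t (s i) | i <- enum 'I_n]).
  rewrite sumrB sumr_const card_Sn scalerBr -scaler_nat scalerA mulVf // scale1r.
  by congr (_ - _ *: _); apply: eq_bigr => s _; rewrite prod_tnth_word.
apply/spanZ/span_sum => s _; apply: perm_word; rewrite perm_sym.
by apply/(@tuple_permP _ _ _ t); exists s.
Qed.

Definition is_symmetrized (u : U) : Prop :=
  exists m (t : m.-tuple V), u = symmetrize iota t.

Lemma span_symmetrized u : span is_symmetrized u.
Proof.
have word_sym n ys : (size ys < n)%N -> span is_symmetrized (word ys).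
  elim: n ys => // n IHn ys; rewrite ltnS => le_ys_n.
  rewrite -(subrK (symmetrize iota (in_tuple ys)) (word ys)).
  apply: spanD; last by apply: span_gen; exists (size ys), (in_tuple ys).
  apply: (span_sub _ (word_sub_symmetrize ys)) => _ [xs lt_xs ->].
  exact: IHn (leq_trans lt_xs le_ys_n).
by apply: (span_sub _ (span_words u)) => _ [xs ->]; apply: (word_sym (size xs).+1).
Qed.

(* [x (x) 1 + 1 (x) x], acting on [End U] by [f |-> x f + f ( . x)] *)
Definition delta (x : V) : lend (lend U) := lmul (lmul (iota x)) + rmul (rmul (iota x)).

Lemma delta_lie : is_lie_map br delta.
Proof.
split=> [a x y | x y]; first by rewrite /delta iota_linear !linearP scalerDr addrACA.
rewrite /delta commrD_commutator; [|exact: lmul_rmulC | exact/esym/lmul_rmulC].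
by rewrite iota_br !linearB /= !lmulM !rmulM.
Qed.

Lemma delta_comm_rmul_lmul a x : GRing.comm (rmul (lmul a)) (delta x).
Proof.
by rewrite /GRing.comm /delta mulrDl mulrDr -lmul_rmulC -!rmulM [lmul a * _]lmul_rmulC.
Qed.

Lemma delta_comm_lmul_rmul a x : GRing.comm (lmul (rmul a)) (delta x).
Proof.
by rewrite /GRing.comm /delta mulrDl mulrDr lmul_rmulC -!lmulM [lmul (iota x) * _]lmul_rmulC.
Qed.

Section ComultiplicationOperator.
Variable h : U -> lend (lend U).
Hypotheses (h_hom : is_alg_hom h) (h_iota : forall x, h (iota x) = delta x).

Let h_linear : linear h. Proof. by case: h_hom. Qed.
HB.instance Definition _ := GRing.isLinear.Build K U _ *:%R h h_linear.

Definition mul_comul (u : U) : U := h u 1 1.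

Lemma mul_comul_linear : linear mul_comul.
Proof. by move=> a u v; rewrite /mul_comul linearP. Qed.

HB.instance Definition _ := GRing.isLinear.Build K U U *:%R mul_comul mul_comul_linear.

Lemma h_word ys f v : h (word ys) f v =
  \sum_(b <- masks (size ys)) word (mask b ys) * f (v * word (mask (map negb b) ys)).
Proof.
case: h_hom => _ h1 hM; elim: ys f v => [|y ys IHys] f v /=.
  by rewrite /word big_nil h1 big_seq1 /= !big_nil mul1r mulr1.
rewrite word_cons hM h_iota /= !IHys big_cat /= !big_map mulr_sumr.
by congr (_ + _); apply: eq_bigr => b _; rewrite word_cons mulrA.
Qed.

Lemma mul_comul_word ys : mul_comul (word ys) =
  \sum_(b <- masks (size ys)) word (mask b ys) * word (mask (map negb b) ys).
Proof. by rewrite /mul_comul h_word; apply: eq_bigr => b _; rewrite mul1r. Qed.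

Lemma mul_comul_symmetrize m (t : m.-tuple V) :
  mul_comul (symmetrize iota t) = (2 ^ m)%:R *: symmetrize iota t.
Proof.
pose w (s : 'S_m) := [seq tnth t (s i) | i <- enum 'I_m].
(* each of the 2^m splittings of the letters merely reorders them *)
have mask_sum b : b \in masks m ->
    \sum_(s : 'S_m) word (mask b (w s)) * word (mask (map negb b) (w s)) =
    \sum_(s : 'S_m) word (w s).
  move=> /size_mem_masks /mask_cat_enum_perm[p ep].
  rewrite [RHS](reindex_inj (mulgI p)); apply: eq_bigr => s _.
  have -> : w (p * s)%g = [seq tnth t (s i) | i <- [seq p i | i <- enum 'I_m]].
    by rewrite -map_comp; apply: eq_map => i; rewrite /= permM.
  by rewrite -word_cat -ep map_cat !map_mask.
rewrite /symmetrize linearZ linear_sum /= scalerA mulrC -scalerA; congr (_ *: _).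
under eq_bigr => s _ do rewrite prod_tnth_word mul_comul_word size_map size_enum_ord.
rewrite exchange_big (eq_big_seq _ mask_sum) big_const_seq count_predT size_masks.
by rewrite iter_addr_0 scaler_nat; congr (_ *+ _); apply: eq_bigr => s _; rewrite prod_tnth_word.
Qed.

Lemma h_comm (X : lend (lend U)) :
  (forall x, GRing.comm X (delta x)) -> forall u, GRing.comm X (h u).
Proof.
case: h_hom => _ h1 hM X_delta.
apply: (enveloping_ind Henv) => [|u v|a u|u v|x]; rewrite ?h1 ?raddfD ?linearZ ?hM ?h_iota //.
- exact: commr1.
- exact: commrD.
- by move=> Xu; rewrite /GRing.comm -scalerAr -scalerAl Xu.
exact: commrM.
Qed.

Lemma mul_comul_ad x u :
  mul_comul (iota x * u - u * iota x) = iota x * mul_comul u - mul_comul u * iota x.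
Proof.
have hL a : h u (lmul a) 1 = h u 1 a.
  have /(congr1 (fun F : lend (lend U) => F 1 1)) := h_comm (delta_comm_rmul_lmul a) u.
  by rewrite !lend_mulE /= mul1r mulr1.
have hR a : h u (rmul a) 1 = h u 1 1 * a.
  have /(congr1 (fun F : lend (lend U) => F 1 1)) := h_comm (delta_comm_lmul_rmul a) u.
  by rewrite !lend_mulE /= mulr1.
case: h_hom => _ _ hM; rewrite linearB /= /mul_comul !hM h_iota.
rewrite (lend_mulE (delta x)) (lend_mulE (h u)) !lend_addE /= mulr1 !mul1r.
by rewrite linearD lend_addE hL hR addrKA.
Qed.

Lemma mul_comul_commutator a b : span is_commutator (mul_comul (a * b - b * a)).
Proof.
elim: (span_words a) b => [_ [xs ->] | | c a1 a2 _ IH1 _ IH2] b.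
- elim: xs b => [|x xs IHxs] b.
    by rewrite /word big_nil mul1r mulr1 subrr linear0; apply: span0.
  have -> : word (x :: xs) * b - b * word (x :: xs) =
      (iota x * (word xs * b) - word xs * b * iota x) +
      (word xs * (b * iota x) - b * iota x * word xs).
    by rewrite word_cons !mulrA addrA subrK.
  rewrite linearD /= mul_comul_ad; apply: spanD (IHxs _).
  by apply: span_gen; exists (iota x, mul_comul (word xs * b)).
- by rewrite mul0r mulr0 subrr linear0; apply: span0.
have -> : (c *: a1 + a2) * b - b * (c *: a1 + a2) = c *: (a1 * b - b * a1) + (a2 * b - b * a2).
  by rewrite mulrDl mulrDr -scalerAl -scalerAr scalerBr opprD addrACA.
by rewrite linearP; apply: span_comb.
Qed.

End ComultiplicationOperator.

Lemma comul_operator_exists : exists T : lend U,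
  (forall m u, in_Sym iota m u -> T u = (2 ^ m)%:R *: u) /\
  (forall u, span is_commutator u -> span is_commutator (T u)).
Proof.
have [[h [h_hom h_iota]] _] := (proj2 Henv) _ _ delta_lie.
exists (Lend (mul_comul_linear h_hom)); split=> [m u /span_rangeP Su | u].
  apply: (span_linear_eq (mul_comul_linear h_hom) _ _ Su) => [b v w | _ [t ->]].
    by rewrite scalerDr !scalerA mulrC.
  exact: mul_comul_symmetrize.
by apply: span_map (mul_comul_linear h_hom) _ u => _ [[a b] ->]; apply: mul_comul_commutator.
Qed.

End Enveloping.

Theorem theorem3p1 (K : fieldType) (Hchar : [pchar K] =i pred0)
  (V : lmodType K) (br : V -> V -> V) (Hlie : is_lie_bracket br)
  (U : algType K) (iota : V -> U) (Henv : is_enveloping br iota) :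
  (* the images |Sym^m g| span |U(g)| *)
  (forall u : U, exists (N : nat) (us : 'I_N -> U),
      (forall m : 'I_N, in_Sym iota m (us m)) /\
      in_comm (u - \sum_(m < N) us m)) /\
  (* and the sum of the images is direct *)
  (forall (N : nat) (us : 'I_N -> U),
      (forall m : 'I_N, in_Sym iota m (us m)) ->
      in_comm (\sum_(m < N) us m) ->
      forall m : 'I_N, in_comm (us m)).
Proof.
split=> [u | N us us_Sym /in_commE us_comm m].
- pose G m v := exists t : m.-tuple V, v = symmetrize iota t.
  have [N [us [us_Sym ->]]] := @span_graded _ _ G u (span_symmetrized Henv Hchar u).
  exists N, (fun m : 'I_N => us m); split; first by move=> m; apply/span_rangeP/us_Sym.
  by rewrite subrr; apply/in_commE/span0.
have [T [T_Sym T_comm]] := comul_operator_exists Henv.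
have pow2_inj : injective (fun m => (2 ^ m)%:R : K).
  by move=> i j /(pchar0_natr_inj Hchar)/(expnI (isT : 1 < 2)%N).
by apply/in_commE; move: m; apply: (span_eigen_components pow2_inj T_comm) => // k; apply: T_Sym.
Qed.
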